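(* Let $m\ge2$ and consider a preferential (dynamic) attachment circuit of index $m$. Let $Y_n^{(0)}$ and $Y_n^{(1)}$ be the numbers of nodes of outdegree $0$ and $1$ after $n$ insertions. Then, as $n\to\infty$, $\frac1n$ times the covariance matrix of the random vector $(Y_n^{(0)},Y_n^{(1)})^\top$ converges to $$\begin{pmatrix}\frac{2m^2(m+1)}{(3m+1)(2m+1)^2} & -\frac{4(m+1)^2m^2}{(4m+1)(3m+1)(2m+1)^2}\\[2pt] -\frac{4(m+1)^2m^2}{(4m+1)(3m+1)(2m+1)^2} & \frac{2m^2(m+1)(48m^3+59m^2+27m+4)}{(5m+1)(4m+1)(3m+1)^2(2m+1)^2}\end{pmatrix}.$$
   Context: Preferential (dynamic) attachment circuit of index $m\ge1$: at time $0$ there is a single node labeled $0$. At each time $n\ge1$ a new node labeled $n$ is added and $m$ parents are chosen for it one at a time, with replacement, among nodes $0,\dots,n-1$. Before the $(i+1)$-th choice ($i=0,\dots,m-1$), each existing node $v$ is chosen with probability $\frac{d_i(v)+1}{\sum_{x}(d_i(x)+1)}$, where $d_i(x)$ is the outdegree of $x$ in the current multigraph including the edges created by the first $i$ choices for node $n$; after each choice an edge from the chosen parent to node $n$ is immediately added (multi-edges allowed, counted with multiplicity). *)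

From HB Require Import structures.
From mathcomp Require Import all_boot all_order all_algebra.
From mathcomp Require Import all_classical all_reals all_analysis.
Set Implicit Arguments. Unset Strict Implicit. Unset Printing Implicit Defensive.
Import Order.TTheory GRing.Theory Num.Theory numFieldNormedType.Exports.
Local Open Scope ring_scope.

(* A state of the preferential attachment circuit is the outdegree vector
   d : seq nat, where nth 0 d v is the outdegree of node v (nodes 0 .. size d - 1). *)

Definition pa_weight (d : seq nat) : nat := (\sum_(v < size d) (nth 0%N d v).+1)%N.

Fixpoint pa_choices {R : realType} (k : nat) (d : seq nat)
  (f : seq nat -> R) : R :=
  match k with
  | 0 => f d
  | k'.+1 => \sum_(v < size d)
      (((nth 0%N d v).+1)%:R / (pa_weight d)%:R) * pa_choices k' (incr_nth d v) f
  end.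

Fixpoint pa_insert {R : realType} (m n : nat) (d : seq nat)
  (f : seq nat -> R) : R :=
  match n with
  | 0 => f d
  | n'.+1 => pa_choices m d (fun d' => pa_insert m n' (rcons d' 0%N) f)
  end.

Definition pa_E {R : realType} (m n : nat) (f : seq nat -> R) : R :=
  pa_insert m n [:: 0%N] f.

Definition Ycount {R : realType} (j : nat) (d : seq nat) : R :=
  (count (pred1 j) d)%:R.

Definition pa_cov {R : realType} (m n : nat) : 'M[R]_2 :=
  \matrix_(i < 2, j < 2)
    (pa_E m n (fun d => Ycount i d * Ycount j d)
     - pa_E m n (Ycount i) * pa_E m n (Ycount j)).

Definition pa_limit {R : realType} (m : nat) : 'M[R]_2 :=
  let M := m%:R : R in
  let off := - (4 * (M + 1) ^+ 2 * M ^+ 2)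
              / ((4 * M + 1) * (3 * M + 1) * (2 * M + 1) ^+ 2) in
  \matrix_(i < 2, j < 2)
    if (i == 0 :> nat) && (j == 0 :> nat) then
      2 * M ^+ 2 * (M + 1) / ((3 * M + 1) * (2 * M + 1) ^+ 2)
    else if (i == 1 :> nat) && (j == 1 :> nat) then
      2 * M ^+ 2 * (M + 1) * (48 * M ^+ 3 + 59 * M ^+ 2 + 27 * M + 4)
        / ((5 * M + 1) * (4 * M + 1) * (3 * M + 1) ^+ 2 * (2 * M + 1) ^+ 2)
    else off.

From HB Require Import structures.
From mathcomp Require Import all_boot all_order all_algebra.
From mathcomp Require Import all_classical all_reals all_analysis.
From mathcomp Require Import ring lra zify.
Import Order.TTheory GRing.Theory Num.Theory numFieldNormedType.Exports.
Local Open Scope ring_scope.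
Local Open Scope classical_set_scope.

(* A parent choice made at total weight W moves (Y0, Y1) to (Y0 - 1, Y1 + 1)
   with probability Y0 / W and to (Y0, Y1 - 1) with probability 2 Y1 / W.
   Hence the expectation of a quadratic polynomial in (Y0, Y1) after K choices
   is again a quadratic polynomial whose coefficients are explicit rational
   functions of K and W, and the first and second moments of (Y0, Y1) satisfy
   explicit linear recurrences.  Each of E Y0, E Y1, Var Y0, Cov(Y0, Y1) and
   Var Y1 obeys x (n + 1) = c n * x n + b n, where c n is the probability that
   the m choices at step n all miss a set of total weight 1, 2, 2, 3, 4
   respectively, so that n (1 - c n) --> a with a = m / (m + 1) times that
   weight, while b n --> l is computed from the previous limits.  Such a
   recurrence forces x n / n --> l / (1 + a). *)

Lemma pa_weightE d : pa_weight d = (sumn d + size d)%N.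
Proof.
rewrite /pa_weight sumnE (big_nth 0%N) big_mkord.
under eq_bigr do rewrite -addn1.
by rewrite big_split /= sum1_card card_ord.
Qed.

Lemma pa_weight_rcons d x : pa_weight (rcons d x) = (pa_weight d + x.+1)%N.
Proof. by rewrite !pa_weightE -cats1 sumn_cat size_cat /=; lia. Qed.

Lemma pa_weight_incr_nth d v : (v < size d)%N ->
  pa_weight (incr_nth d v) = (pa_weight d).+1.
Proof.
move=> hv; rewrite !pa_weightE size_incr_nth hv.
suff -> : sumn (incr_nth d v) = (sumn d).+1 by [].
by elim: d v hv => [|x d IH] [|v] //= hv; rewrite IH // addnS.
Qed.

Lemma count_incr_nth j d v : (v < size d)%N ->
  (count (pred1 j) (incr_nth d v) + (nth 0 d v == j) =
   count (pred1 j) d + ((nth 0 d v).+1 == j))%N.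
Proof.
elim: d v => [|x d IH] [|v] //= hv; last by rewrite -addnA IH // addnA.
by case: (x == j); case: (x.+1 == j); lia.
Qed.

Section ClosedForms.
Context {R : realFieldType}.
Implicit Types K W a b : R.

Definition choice_kernel (G : R -> R -> R) W a b : R :=
  (a * G (a - 1) (b + 1) + 2 * b * G a (b - 1) + (W - a - 2 * b) * G a b) / W.

(* [miss j K W] is the probability that K successive choices, starting from
   total weight W, all avoid a fixed set of nodes of total weight j. *)
Fixpoint miss (j : nat) K W : R :=
  if j is i.+1 then (W - j%:R) / (W + K - j%:R) * miss i K W else 1.

Definition mean_Y0 K W a b := a * miss 1 K W.
Definition mean_Y1 K W a b := b * miss 2 K W + a * K * miss 1 K W / (W + K - 2).
Definition mean_Y0Y0 K W a b := a * (a - 1) * miss 2 K W + a * miss 1 K W.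
Definition mean_Y0Y1 K W a b :=
  a * (a - 1) * K * miss 2 K W / (W + K - 3) + a * b * miss 3 K W.
Definition mean_Y1Y1 K W a b := mean_Y1 K W a b
  + a * (a - 1) * K * (K - 1) * miss 2 K W / (W + K - 4) / (W + K - 3)
  + 2 * a * b * K * miss 3 K W / (W + K - 4) + b * (b - 1) * miss 4 K W.

Definition quad (c0 c1 c2 c3 c4 c5 a b : R) :=
  c0 + c1 * a + c2 * b + c3 * (a * a) + c4 * (a * b) + c5 * (b * b).
Definition mean_quad (c0 c1 c2 c3 c4 c5 K W a b : R) :=
  c0 + c1 * mean_Y0 K W a b + c2 * mean_Y1 K W a b + c3 * mean_Y0Y0 K W a b
  + c4 * mean_Y0Y1 K W a b + c5 * mean_Y1Y1 K W a b.

Ltac closed_form_field := rewrite /choice_kernel /mean_quad /mean_Y1Y1 /mean_Y0Y1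
  /mean_Y0Y0 /mean_Y1 /mean_Y0 /=; field; do ?[apply/andP; split];
  apply: lt0r_neq0; lra.

Lemma mean_quad0 c0 c1 c2 c3 c4 c5 W a b : 5 <= W ->
  mean_quad c0 c1 c2 c3 c4 c5 0 W a b = quad c0 c1 c2 c3 c4 c5 a b.
Proof. by move=> W_ge5; rewrite /quad; closed_form_field. Qed.

Section Propagation.
Variables K W a b : R.

Lemma choice_kernel_mean_Y0 : 0 <= K -> 5 <= W ->
  choice_kernel (mean_Y0 K (W + 1)) W a b = mean_Y0 (K + 1) W a b.
Proof. by move=> K_ge0 W_ge5; closed_form_field. Qed.

Lemma choice_kernel_mean_Y1 : 0 <= K -> 5 <= W ->
  choice_kernel (mean_Y1 K (W + 1)) W a b = mean_Y1 (K + 1) W a b.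
Proof. by move=> K_ge0 W_ge5; closed_form_field. Qed.

Lemma choice_kernel_mean_Y0Y0 : 0 <= K -> 5 <= W ->
  choice_kernel (mean_Y0Y0 K (W + 1)) W a b = mean_Y0Y0 (K + 1) W a b.
Proof. by move=> K_ge0 W_ge5; closed_form_field. Qed.

Lemma choice_kernel_mean_Y0Y1 : 0 <= K -> 5 <= W ->
  choice_kernel (mean_Y0Y1 K (W + 1)) W a b = mean_Y0Y1 (K + 1) W a b.
Proof. by move=> K_ge0 W_ge5; closed_form_field. Qed.

Lemma choice_kernel_mean_Y1Y1 : 0 <= K -> 5 <= W ->
  choice_kernel (mean_Y1Y1 K (W + 1)) W a b = mean_Y1Y1 (K + 1) W a b.
Proof. by move=> K_ge0 W_ge5; closed_form_field. Qed.

Lemma choice_kernel_mean_quad c0 c1 c2 c3 c4 c5 : 0 <= K -> 5 <= W ->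
  choice_kernel (mean_quad c0 c1 c2 c3 c4 c5 K (W + 1)) W a b
  = mean_quad c0 c1 c2 c3 c4 c5 (K + 1) W a b.
Proof.
move=> K_ge0 W_ge5; rewrite /mean_quad -choice_kernel_mean_Y0 //.
rewrite -choice_kernel_mean_Y1 // -choice_kernel_mean_Y0Y0 //.
rewrite -choice_kernel_mean_Y0Y1 // -choice_kernel_mean_Y1Y1 //.
rewrite /choice_kernel; field; apply: lt0r_neq0; lra.
Qed.
End Propagation.
End ClosedForms.

Section Expectations.
Variable R : realType.
Local Notation Y0 := (@Ycount R 0).
Local Notation Y1 := (@Ycount R 1).

Lemma Ycount_rcons j d x : Ycount j (rcons d x) = Ycount j d + (x == j)%:R :> R.
Proof. by rewrite /Ycount -cats1 count_cat /= addn0 natrD. Qed.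

Lemma sum_Ycount j d : \sum_(v < size d) ((nth 0%N d v == j)%:R : R) = Ycount j d.
Proof.
rewrite /Ycount -natr_sum -sum1_count (big_nth 0%N) big_mkord; congr (_%:R).
by rewrite [RHS]big_mkcond; apply: eq_bigr => v _ /=; case: (_ == _).
Qed.

Lemma pa_choice_kernel (G : R -> R -> R) d :
  \sum_(v < size d) ((nth 0%N d v).+1%:R / (pa_weight d)%:R) *
      G (Y0 (incr_nth d v)) (Y1 (incr_nth d v))
  = choice_kernel G (pa_weight d)%:R (Y0 d) (Y1 d).
Proof.
set W := (pa_weight d)%:R; set a := Y0 d; set b := Y1 d.
pose is0 v : R := (nth 0%N d v == 0%N)%:R; pose is1 v : R := (nth 0%N d v == 1%N)%:R.
have summand (v : 'I_(size d)) :
  ((nth 0%N d v).+1%:R / W) * G (Y0 (incr_nth d v)) (Y1 (incr_nth d v))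
  = W^-1 * (is0 v * G (a - 1) (b + 1) + 2 * is1 v * G a (b - 1)
            + ((nth 0%N d v).+1%:R - is0 v - 2 * is1 v) * G a b).
  have Y_incr j : Ycount j (incr_nth d v) =
      Ycount j d + ((nth 0%N d v).+1 == j)%:R - (nth 0%N d v == j)%:R :> R.
    by rewrite /Ycount -natrD -(count_incr_nth j d v (ltn_ord v)) natrD addrK.
  rewrite /is0 /is1 !Y_incr -/a -/b.
  by case: (nth 0%N d v) => [|[|k]] /=; rewrite ?subr0 ?addr0; ring.
rewrite (eq_bigr _ (fun v _ => summand v)) -mulr_sumr mulrC /choice_kernel.
congr (_ / _); rewrite !big_split /= -!mulr_suml !sumrB -!mulr_sumr !sum_Ycount.
by rewrite -natr_sum.
Qed.

Lemma pa_choices_quad c0 c1 c2 c3 c4 c5 k d : (5 <= pa_weight d)%N ->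
  pa_choices k d (fun x => quad c0 c1 c2 c3 c4 c5 (Y0 x) (Y1 x))
  = mean_quad c0 c1 c2 c3 c4 c5 k%:R (pa_weight d)%:R (Y0 d) (Y1 d).
Proof.
elim: k d => [|k IH] d hd /=; first by rewrite mean_quad0 // ler_nat.
under eq_bigr => v _.
  have weight_v := pa_weight_incr_nth d v (ltn_ord v).
  have weight_v_ge5 : (5 <= pa_weight (incr_nth d v))%N by rewrite weight_v leqW.
  rewrite IH // weight_v -[(pa_weight d).+1%:R]natr1; over.
by rewrite pa_choice_kernel choice_kernel_mean_quad ?natr1 ?ler0n ?ler_nat.
Qed.

Lemma pa_choices_linear k d c (f g : seq nat -> R) :
  pa_choices k d (fun x => c * f x + g x) = c * pa_choices k d f + pa_choices k d g.
Proof.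
elim: k d => [|k IH] d //=.
under eq_bigr => v _ do rewrite IH mulrDr mulrCA.
by rewrite big_split /= -mulr_sumr.
Qed.

Lemma pa_choices_const k d (c : R) : (0 < pa_weight d)%N ->
  pa_choices k d (fun _ => c) = c.
Proof.
elim: k d => [|k IH] d hd //=.
under eq_bigr => v _ do rewrite IH ?pa_weight_incr_nth ?ltn_ord //.
rewrite pa_choice_kernel /choice_kernel; field.
by rewrite pnatr_eq0 -lt0n.
Qed.

Lemma pa_choices_eq_on_weight k d (f g : seq nat -> R) :
  (forall x, pa_weight x = (pa_weight d + k)%N -> f x = g x) ->
  pa_choices k d f = pa_choices k d g.
Proof.
elim: k d => [|k IH] d fg /=; first by apply: fg; rewrite addn0.
apply: eq_bigr => v _; congr (_ * _); apply: IH => x hx; apply: fg.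
by rewrite hx pa_weight_incr_nth ?ltn_ord // addSnnS.
Qed.

Variable m : nat.

Lemma pa_insert_succ n d (f : seq nat -> R) : pa_insert m n.+1 d f =
  pa_insert m n d (fun x => pa_choices m x (fun y => f (rcons y 0%N))).
Proof.
elim: n d => [|n IH] d //=.
by congr (pa_choices _ _ _); apply: boolp.funext => y; exact: IH.
Qed.

Lemma pa_insert_linear n d c (f g : seq nat -> R) :
  pa_insert m n d (fun x => c * f x + g x) = c * pa_insert m n d f + pa_insert m n d g.
Proof.
elim: n d => [|n IH] d //=; rewrite -pa_choices_linear.
by congr (pa_choices _ _ _); apply: boolp.funext => y; exact: IH.
Qed.

Lemma pa_insert_const n d (c : R) : (0 < pa_weight d)%N ->
  pa_insert m n d (fun _ => c) = c.
Proof.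
elim: n d => [|n IH] d hd //=.
rewrite -[RHS](pa_choices_const m d c hd); congr (pa_choices _ _ _).
by apply: boolp.funext => y; rewrite IH // pa_weight_rcons addnS.
Qed.

Lemma pa_insert_eq_on_weight n d (f g : seq nat -> R) :
  (forall x, pa_weight x = (pa_weight d + n * m.+1)%N -> f x = g x) ->
  pa_insert m n d f = pa_insert m n d g.
Proof.
elim: n d => [|n IH] d fg /=; first by apply: fg; rewrite mul0n addn0.
apply: pa_choices_eq_on_weight => x hx; apply: IH => y hy; apply: fg.
by rewrite hy pa_weight_rcons hx; lia.
Qed.
End Expectations.

Section Moments.
Context {R : realType}.
Variable m : nat.
Hypothesis m_ge1 : (1 <= m)%N.
Local Notation Y0 := (@Ycount R 0).
Local Notation Y1 := (@Ycount R 1).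
Local Notation M := (m%:R : R).

Definition pa_mean j n : R := pa_E m n (Ycount j).
Definition pa_comoment i j n : R := pa_E m n (fun d => Ycount i d * Ycount j d).
Definition pa_covariance i j n : R :=
  pa_comoment i j n - pa_mean i n * pa_mean j n.
Definition weight_at n : R := (1 + n * m.+1)%N%:R.

Local Notation W n := (weight_at n).
Local Notation p j n := (miss j M (W n)).
Local Notation q j n := ((W n + M - j%:R)^-1).

Lemma pa_E_quad c0 c1 c2 c3 c4 c5 n :
  pa_E m n (fun x => quad c0 c1 c2 c3 c4 c5 (Y0 x) (Y1 x)) =
  c0 + c1 * pa_mean 0 n + c2 * pa_mean 1 n + c3 * pa_comoment 0 0 n
  + c4 * pa_comoment 0 1 n + c5 * pa_comoment 1 1 n.
Proof.
have -> : (fun x => quad c0 c1 c2 c3 c4 c5 (Y0 x) (Y1 x)) =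
  (fun x => c1 * Y0 x + (c2 * Y1 x + (c3 * (Y0 x * Y0 x)
   + (c4 * (Y0 x * Y1 x) + (c5 * (Y1 x * Y1 x) + c0))))).
  by apply: boolp.funext => x; rewrite /quad; ring.
rewrite /pa_E !pa_insert_linear pa_insert_const ?pa_weightE //.
by rewrite /pa_mean /pa_comoment /pa_E; ring.
Qed.

(* The new node adds 1 to Y0, turning quad c0 .. c5 into the quadratic with
   coefficients (c0 + c1 + c3, c1 + 2 c3, c2 + c4, c3, c4, c5). *)
Lemma pa_E_succ_moments (f : seq nat -> R) c0 c1 c2 c3 c4 c5 e0 e1 e2 e3 e4 e5 n :
  (2 <= n)%N ->
  (forall x, f x = quad c0 c1 c2 c3 c4 c5 (Y0 x) (Y1 x)) ->
  (forall a b, mean_quad (c0 + c1 + c3) (c1 + 2 * c3) (c2 + c4) c3 c4 c5 M (W n) a b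
               = quad e0 e1 e2 e3 e4 e5 a b) ->
  pa_E m n.+1 f = e0 + e1 * pa_mean 0 n + e2 * pa_mean 1 n
    + e3 * pa_comoment 0 0 n + e4 * pa_comoment 0 1 n + e5 * pa_comoment 1 1 n.
Proof.
move=> n_ge2 fE eE; rewrite -pa_E_quad /pa_E pa_insert_succ.
apply: pa_insert_eq_on_weight => x; rewrite [pa_weight [:: _]]pa_weightE /= => wx.
rewrite -eE; have -> : W n = (pa_weight x)%:R by rewrite /weight_at wx.
rewrite -pa_choices_quad; last by rewrite wx; move: m_ge1; nia.
congr (pa_choices _ _ _); apply: boolp.funext => y.
by rewrite fE !Ycount_rcons /= /quad; ring.
Qed.

Ltac close_moment_step := first
  [ done
  | ring
  | by move=> x; rewrite /quad; ring
  | by move=> a b; rewrite /mean_quad /mean_Y1Y1 /mean_Y0Y1 /mean_Y0Y0 /mean_Y1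
      /mean_Y0 /quad; ring ].

Lemma pa_mean0_succ n : (2 <= n)%N ->
  pa_mean 0 n.+1 = p 1 n * pa_mean 0 n + 1.
Proof.
by move=> n_ge2; rewrite [LHS](pa_E_succ_moments _ 0 1 0 0 0 0 1 (p 1 n) 0 0 0 0);
  close_moment_step.
Qed.

Lemma pa_mean1_succ n : (2 <= n)%N ->
  pa_mean 1 n.+1 = p 2 n * pa_mean 1 n + M * p 1 n * q 2 n * pa_mean 0 n.
Proof.
move=> n_ge2.
by rewrite [LHS](pa_E_succ_moments _ 0 0 1 0 0 0 0 (M * p 1 n * q 2 n) (p 2 n) 0 0 0);
  close_moment_step.
Qed.

Lemma pa_comoment00_succ n : (2 <= n)%N -> pa_comoment 0 0 n.+1 =
  1 + (3 * p 1 n - p 2 n) * pa_mean 0 n + p 2 n * pa_comoment 0 0 n.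
Proof.
move=> n_ge2.
by rewrite [LHS](pa_E_succ_moments _ 0 0 0 1 0 0 1 (3 * p 1 n - p 2 n) 0 (p 2 n) 0 0);
  close_moment_step.
Qed.

Lemma pa_comoment01_succ n : (2 <= n)%N -> pa_comoment 0 1 n.+1 =
  (M * p 1 n * q 2 n - M * p 2 n * q 3 n) * pa_mean 0 n + p 2 n * pa_mean 1 n
  + M * p 2 n * q 3 n * pa_comoment 0 0 n + p 3 n * pa_comoment 0 1 n.
Proof.
move=> n_ge2.
by rewrite [LHS](pa_E_succ_moments _ 0 0 0 0 1 0 0
  (M * p 1 n * q 2 n - M * p 2 n * q 3 n) (p 2 n) (M * p 2 n * q 3 n) (p 3 n) 0);
  close_moment_step.
Qed.

Lemma pa_comoment11_succ n : (2 <= n)%N -> pa_comoment 1 1 n.+1 =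
  (M * p 1 n * q 2 n - M * (M - 1) * p 2 n * q 4 n * q 3 n) * pa_mean 0 n
  + (p 2 n - p 4 n) * pa_mean 1 n + M * (M - 1) * p 2 n * q 4 n * q 3 n * pa_comoment 0 0 n
  + 2 * M * p 3 n * q 4 n * pa_comoment 0 1 n + p 4 n * pa_comoment 1 1 n.
Proof.
move=> n_ge2.
by rewrite [LHS](pa_E_succ_moments _ 0 0 0 0 0 1 0
  (M * p 1 n * q 2 n - M * (M - 1) * p 2 n * q 4 n * q 3 n) (p 2 n - p 4 n)
  (M * (M - 1) * p 2 n * q 4 n * q 3 n) (2 * M * p 3 n * q 4 n) (p 4 n));
  close_moment_step.
Qed.
End Moments.

Section Asymptotics.
Context {R : realType}.

Lemma cvg_to_eq (f : nat -> R) (a b : R) : f @ \oo --> a -> a = b -> f @ \oo --> b.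
Proof. by move=> fa <-. Qed.

Lemma cvg_eventually_eq (f g : nat -> R) (N : nat) (l : R) :
  (forall n, (N <= n)%N -> f n = g n) -> g @ \oo --> l -> f @ \oo --> l.
Proof.
by move=> fg; apply: cvg_trans; apply: near_eq_cvg; exists N => // n /= /fg ->.
Qed.

Lemma cvg_invn : (fun n => (n%:R : R)^-1) @ \oo --> 0.
Proof. by rewrite -cvg_shiftS; exact: cvg_harmonic. Qed.

Lemma cvg_n_div_affine (s g : R) : 0 < s ->
  (fun n => n%:R / (s * n%:R + g)) @ \oo --> s^-1.
Proof.
move=> s_gt0; apply: (@cvg_eventually_eq _ (fun n => (s + g * (n%:R)^-1)^-1) 1).
  move=> n n_gt0; have n_neq0 : (n%:R : R) != 0 by rewrite pnatr_eq0 -lt0n.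
  by rewrite -invf_div; congr (_^-1); field.
apply: cvgV; first exact: lt0r_neq0.
apply: cvg_to_eq; first exact: cvgD (cvg_cst s) (cvgM (cvg_cst g) cvg_invn).
by rewrite mulr0 addr0.
Qed.

Lemma cvg_inv_affine (s g : R) : 0 < s -> (fun n => (s * n%:R + g)^-1) @ \oo --> 0.
Proof.
move=> s_gt0; apply: (@cvg_eventually_eq _ (fun n => n%:R / (s * n%:R + g) / n%:R) 1).
  move=> n n_gt0; have n_neq0 : (n%:R : R) != 0 by rewrite pnatr_eq0 -lt0n.
  by rewrite mulrAC divff // mul1r.
apply: cvg_to_eq; first exact: cvgM (cvg_n_div_affine s g s_gt0) cvg_invn.
by rewrite mulr0.
Qed.

Lemma cvg_div_n_of_null_increments {e d : nat -> R} {N : nat} :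
  (forall n, (N <= n)%N -> `|e n.+1| <= `|e n| + `|d n|) -> d @ \oo --> 0 ->
  (fun n => e n / n%:R) @ \oo --> 0.
Proof.
move=> e_incr d0; apply/cvgrPdist_le => eps eps_gt0.
have eps2_gt0 : 0 < eps / 2 by rewrite divr_gt0.
have /cvgrPdist_le /(_ _ eps2_gt0) [N1 _ d_small] := d0.
set K := maxn N N1.
have e_bound k : `|e (K + k)%N| <= `|e K| + k%:R * (eps / 2).
  elim: k => [|k IH]; first by rewrite addn0 mul0r addr0.
  rewrite addnS; apply: le_trans (e_incr _ _) _.
    by apply: leq_trans (leq_maxl N N1) (leq_addr _ _).
  have d_le : `|d (K + k)%N| <= eps / 2.
    have := d_small (K + k)%N; rewrite /= sub0r normrN; apply.
    exact: leq_trans (leq_maxr N N1) (leq_addr _ _).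
  by rewrite -natr1 mulrDl mul1r addrA lerD.
have eK0 : (fun n => `|e K| * (n%:R)^-1) @ \oo --> (0 : R).
  by apply: cvg_to_eq; [exact: cvgM (cvg_cst _) cvg_invn | rewrite mulr0].
have /cvgrPdist_le /(_ _ eps2_gt0) [N2 _ eK_small] := eK0.
exists (maxn (maxn K N2) 1) => // n /=; rewrite 2!geq_max => /andP[/andP[Kn N2n] n_gt0].
have n_pos : (0 : R) < n%:R by rewrite ltr0n.
have := eK_small n N2n; rewrite /= sub0r normrN normrM normr_id normfV normr_nat.
rewrite sub0r normrN normrM normfV normr_nat !ler_pdivrMr // => eK_le.
have := e_bound (n - K)%N; rewrite subnKC // => eK.
have : (n - K)%N%:R * (eps / 2) <= n%:R * (eps / 2) :> R.
  by rewrite ler_pM2r // ler_nat leq_subr.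
lra.
Qed.

(* With L := l / (1 + a), e n := x n - L * n satisfies
   e (n + 1) = c n * e n + o(1), so it grows sublinearly. *)
Lemma cvg_div_n_affine_recurrence {x c b : nat -> R} {a l : R} {N : nat} :
  (forall n, (N <= n)%N -> x n.+1 = c n * x n + b n) ->
  (forall n, (N <= n)%N -> 0 <= c n <= 1) ->
  (fun n => n%:R * (1 - c n)) @ \oo --> a -> 0 <= a -> b @ \oo --> l ->
  (fun n => x n / n%:R) @ \oo --> l / (1 + a).
Proof.
move=> x_rec c_01 ca a_ge0 bl.
set L := l / (1 + a).
pose e n := x n - L * n%:R.
pose d n := b n - L - L * (n%:R * (1 - c n)).
have d0 : d @ \oo --> 0.
  apply: cvg_to_eq; first exact: cvgB (cvgB bl (cvg_cst L)) (cvgM (cvg_cst L) ca).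
  by rewrite /L; field; apply: lt0r_neq0; lra.
have e_incr n : (N <= n)%N -> `|e n.+1| <= `|e n| + `|d n|.
  move=> Nn; have /andP[c_ge0 c_le1] := c_01 n Nn.
  have -> : e n.+1 = c n * e n + d n by rewrite /e /d x_rec // -natr1; ring.
  apply: le_trans (ler_normD _ _) _; rewrite lerD2r normrM ger0_norm //.
  exact: ler_piMl.
apply: (@cvg_eventually_eq _ (fun n => e n / n%:R + L) 1).
  move=> n n_gt0; have n_neq0 : (n%:R : R) != 0 by rewrite pnatr_eq0 -lt0n.
  by rewrite /e; field.
apply: cvg_to_eq; first exact: cvgD (cvg_div_n_of_null_increments e_incr d0) (cvg_cst L).
by rewrite add0r.
Qed.
End Asymptotics.

Section Limits.
Variable R : realType.
Variable m : nat.
Hypothesis m_ge1 : (1 <= m)%N.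
Local Notation M := (m%:R : R).
Local Notation W n := (@weight_at R m n).
Local Notation p j n := (miss j M (W n)).
Local Notation u j n := ((W n - j%:R) / (W n + M - j%:R)).
Local Notation q j n := ((W n + M - j%:R)^-1).
Local Notation nq j n := (n%:R * q j n).
Local Notation A n := (@pa_mean R m 0 n).
Local Notation B n := (@pa_mean R m 1 n).
Local Notation C i j n := (@pa_covariance R m i j n).
Local Notation nA n := (A n / n%:R).
Local Notation nB n := (B n / n%:R).

Lemma m_natr_gt0 : 0 < M. Proof. by rewrite ltr0n. Qed.

Ltac field_m_gt0 := have := m_natr_gt0; move=> ?;
  field; do ?[apply/andP; split]; apply: lt0r_neq0; lra.

Lemma weight_atE n : W n = (M + 1) * n%:R + 1.
Proof. by rewrite /weight_at; ring. Qed.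

Lemma weight_at_sub_gt0 {j n} : (j <= n)%N -> 0 < W n - j%:R.
Proof.
move=> jn; rewrite weight_atE; have := m_natr_gt0; have := ler0n R n.
have : (j%:R : R) <= n%:R by rewrite ler_nat.
nra.
Qed.

Lemma cvg_weight_inv j : (fun n => q j n) @ \oo --> (0 : R).
Proof.
apply: (@cvg_eventually_eq _ _ (fun n => ((M + 1) * n%:R + (1 + M - j%:R))^-1) 0).
  by move=> n _; rewrite weight_atE; congr (_^-1); ring.
by apply: cvg_inv_affine; have := m_natr_gt0; lra.
Qed.

Lemma cvg_n_div_weight j : (fun n => nq j n) @ \oo --> (M + 1)^-1.
Proof.
apply: (@cvg_eventually_eq _ _ (fun n => n%:R / ((M + 1) * n%:R + (1 + M - j%:R))) 0).
  by move=> n _; rewrite weight_atE; congr (_ * _^-1); ring.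
by apply: cvg_n_div_affine; have := m_natr_gt0; lra.
Qed.

Lemma one_sub_miss_ratio {j n} : (j <= n)%N -> 1 - u j n = M * q j n.
Proof.
move=> jn; have := weight_at_sub_gt0 jn; have := m_natr_gt0 => M0 Wj.
by field; apply: lt0r_neq0; lra.
Qed.

Lemma cvg_miss_ratio j : (fun n => u j n) @ \oo --> (1 : R).
Proof.
apply: (@cvg_eventually_eq _ _ (fun n => 1 - M * q j n) j).
  by move=> n jn; rewrite -one_sub_miss_ratio //; ring.
apply: cvg_to_eq; first exact: cvgB (cvg_cst _) (cvgM (cvg_cst _) (cvg_weight_inv j)).
by rewrite mulr0 subr0.
Qed.

Lemma cvg_miss j : (fun n => p j n) @ \oo --> (1 : R).
Proof.
elim: j => [|j IH] /=; first exact: cvg_cst.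
by apply: cvg_to_eq; [exact: cvgM (cvg_miss_ratio j.+1) IH | rewrite mulr1].
Qed.

Lemma miss_ge0_le1 j n : (j <= n)%N -> 0 <= p j n <= 1.
Proof.
elim: j => [|j IH] jn /=; first by rewrite ler01 lexx.
have /andP[p_ge0 p_le1] := IH (ltnW jn).
have Wj := weight_at_sub_gt0 jn; have := m_natr_gt0 => M0.
have u_ge0 : 0 <= u j.+1 n by apply: divr_ge0; lra.
have u_le1 : u j.+1 n <= 1 by rewrite ler_pdivrMr ?mul1r; lra.
by rewrite mulr_ge0 //= mulr_ile1.
Qed.

Lemma cvg_n_one_sub_miss j :
  (fun n => n%:R * (1 - p j n)) @ \oo --> j%:R * M / (M + 1).
Proof.
elim: j => [|j IH] /=.
  apply: cvg_to_eq; last by rewrite !mul0r.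
  by under eq_fun do rewrite subrr mulr0; exact: cvg_cst.
apply: (@cvg_eventually_eq _ _
  (fun n => M * nq j.+1 n + u j.+1 n * (n%:R * (1 - p j n))) j.+1).
  by move=> n jn; rewrite -mulrCA -one_sub_miss_ratio //; ring.
apply: cvg_to_eq; first exact: cvgD (cvgM (cvg_cst _) (cvg_n_div_weight _))
  (cvgM (cvg_miss_ratio _) IH).
by rewrite -natr1; field_m_gt0.
Qed.

Lemma cvg_div_n_miss_recurrence {j N : nat} {x b : nat -> R} {l : R} :
  (forall n, (N <= n)%N -> x n.+1 = p j n * x n + b n) -> (j <= N)%N ->
  b @ \oo --> l -> (fun n => x n / n%:R) @ \oo --> l / (1 + j%:R * M / (M + 1)).
Proof.
move=> x_rec jN; apply: cvg_div_n_affine_recurrence x_rec _ (cvg_n_one_sub_miss j) _.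
  by move=> n Nn; apply: miss_ge0_le1; exact: leq_trans Nn.
by rewrite divr_ge0 ?mulr_ge0 // addr_ge0.
Qed.

Ltac cvg_poly := repeat first
  [ exact: cvg_cst
  | lazymatch goal with
    | |- cvg_to (nbhs (fmap (fun n => @?x n / n%:R) _)) _ => eassumption
    | |- cvg_to (nbhs (fmap (fun n => n%:R * @?x n) _)) _ => exact: cvg_n_div_weight
    | |- cvg_to (nbhs (fmap (fun n => miss _ _ (@?w n)) _)) _ => exact: cvg_miss
    | |- cvg_to (nbhs (fmap (fun n => (@?x n - _) / (@?y n - _)) _)) _ =>
        exact: cvg_miss_ratio
    | |- cvg_to (nbhs (fmap (fun n => (@?x n)^-1) _)) _ => exact: cvg_weight_inv
    end
  | apply: cvgD | apply: cvgN | apply: cvgM ].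

Lemma weight_at_denoms_neq0 {n} : (4 <= n)%N -> [&& (n%:R : R) != 0,
  W n + M - 1%:R != 0, W n + M - 2%:R != 0, W n + M - 3%:R != 0 & W n + M - 4%:R != 0].
Proof.
move=> n_ge4; rewrite pnatr_eq0 -lt0n (leq_trans _ n_ge4) //=.
have W_gt0 j : (j <= 4)%N -> 0 < W n + M - j%:R.
  move=> j_le4; have := weight_at_sub_gt0 (leq_trans j_le4 n_ge4).
  by have := m_natr_gt0; lra.
by apply/and4P; split; apply: lt0r_neq0; apply: W_gt0.
Qed.

(* Generalising [W n] keeps [field] from unfolding [weight_at], so that its
   side conditions are literally those of [weight_at_denoms_neq0]. *)
Ltac field_at n_ge4 := have := weight_at_denoms_neq0 n_ge4; cbn [miss];
  move: (weight_at _ _) => w /and5P[? ? ? ? ?];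
  field; do ?[apply/andP; split]; done.

Lemma cvg_pa_mean0 : (fun n => nA n) @ \oo --> (M + 1) / (2 * M + 1).
Proof.
apply: cvg_to_eq.
  by apply: (cvg_div_n_miss_recurrence (pa_mean0_succ _ m_ge1)) => //; cvg_poly.
by field_m_gt0.
Qed.

Lemma cvg_pa_mean1 :
  (fun n => nB n) @ \oo --> M * (M + 1) / ((2 * M + 1) * (3 * M + 1)).
Proof.
have := cvg_pa_mean0 => lim_A.
apply: cvg_to_eq.
  apply: (cvg_div_n_miss_recurrence (pa_mean1_succ _ m_ge1)) => //.
  apply: (@cvg_eventually_eq _ _ (fun n => M * p 1 n * nq 2 n * nA n) 4).
    by move=> n n_ge4; field_at n_ge4.
  by cvg_poly.
by field_m_gt0.
Qed.

Lemma pa_covariance00_succ n : (4 <= n)%N -> C 0 0 n.+1 = p 2 n * C 0 0 n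
  + (M * p 1 n * nq 2 n * nA n - M * p 1 n * nq 1 n * nq 2 n * (nA n * nA n)).
Proof.
move=> n_ge4; have n_ge2 : (2 <= n)%N by exact: leq_trans n_ge4.
rewrite /pa_covariance pa_comoment00_succ // pa_mean0_succ //.
by field_at n_ge4.
Qed.

Lemma pa_covariance01_succ n : (4 <= n)%N -> C 0 1 n.+1 = p 3 n * C 0 1 n
  + (M * p 2 n * nq 3 n * (C 0 0 n / n%:R) - M * p 2 n * nq 3 n * nA n
     + M * p 1 n * (1 - 2 * M * q 1 n) * nq 2 n * nq 3 n * (nA n * nA n)
     - 2 * M * p 2 n * nq 1 n * nq 3 n * (nA n * nB n)).
Proof.
move=> n_ge4; have n_ge2 : (2 <= n)%N by exact: leq_trans n_ge4.
rewrite /pa_covariance pa_comoment01_succ // pa_mean0_succ // pa_mean1_succ //.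
by field_at n_ge4.
Qed.

Lemma pa_covariance11_succ n : (4 <= n)%N -> C 1 1 n.+1 = p 4 n * C 1 1 n
  + (M * (M - 1) * p 2 n * nq 4 n * q 3 n * (C 0 0 n / n%:R)
     + 2 * M * p 3 n * nq 4 n * (C 0 1 n / n%:R)
     + (M * p 1 n * nq 2 n - M * (M - 1) * p 2 n * nq 4 n * q 3 n) * nA n
     + M * p 2 n * (nq 4 n + u 4 n * nq 3 n) * nB n
     + M * ((M - 1) * p 2 n * nq 4 n * nq 3 n - M * p 1 n * p 1 n * nq 2 n * nq 2 n)
       * (nA n * nA n)
     + 4 * M * p 2 n * (p 1 n * nq 2 n * nq 4 n - M * q 1 n * nq 3 n * nq 4 n)
       * (nA n * nB n)
     - 2 * M * p 2 n * (u 4 n * nq 1 n * nq 3 n + p 1 n * nq 2 n * nq 4 n)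
       * (nB n * nB n)).
Proof.
move=> n_ge4; have n_ge2 : (2 <= n)%N by exact: leq_trans n_ge4.
rewrite /pa_covariance pa_comoment11_succ // pa_mean1_succ //.
by field_at n_ge4.
Qed.

Lemma cvg_pa_covariance00 : (fun n => C 0 0 n / n%:R) @ \oo -->
  2 * M ^+ 2 * (M + 1) / ((3 * M + 1) * (2 * M + 1) ^+ 2).
Proof.
have := cvg_pa_mean0 => lim_A.
apply: cvg_to_eq.
  by apply: (cvg_div_n_miss_recurrence pa_covariance00_succ) => //; cvg_poly.
by field_m_gt0.
Qed.

Lemma cvg_pa_covariance01 : (fun n => C 0 1 n / n%:R) @ \oo -->
  - (4 * (M + 1) ^+ 2 * M ^+ 2) / ((4 * M + 1) * (3 * M + 1) * (2 * M + 1) ^+ 2).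
Proof.
have := cvg_pa_mean0 => lim_A; have := cvg_pa_mean1 => lim_B.
have := cvg_pa_covariance00 => lim_C00.
apply: cvg_to_eq.
  by apply: (cvg_div_n_miss_recurrence pa_covariance01_succ) => //; cvg_poly.
by field_m_gt0.
Qed.

Lemma cvg_pa_covariance11 : (fun n => C 1 1 n / n%:R) @ \oo -->
  2 * M ^+ 2 * (M + 1) * (48 * M ^+ 3 + 59 * M ^+ 2 + 27 * M + 4)
  / ((5 * M + 1) * (4 * M + 1) * (3 * M + 1) ^+ 2 * (2 * M + 1) ^+ 2).
Proof.
have := cvg_pa_mean0 => lim_A; have := cvg_pa_mean1 => lim_B.
have := cvg_pa_covariance00 => lim_C00; have := cvg_pa_covariance01 => lim_C01.
apply: cvg_to_eq.
  by apply: (cvg_div_n_miss_recurrence pa_covariance11_succ) => //; cvg_poly.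
by field_m_gt0.
Qed.
End Limits.

Lemma cvg_mx_entrywise {R : realType} {T : Type} {p q : nat} (F : set_system T)
    {FF : Filter F} (f : T -> 'M[R]_(p, q)) (L : 'M[R]_(p, q)) :
  (forall i j, (fun t => f t i j) @ F --> L i j) -> f @ F --> L.
Proof.
move=> fL; rewrite [L]matrix_sum_delta.
under eq_cvg do rewrite [f _]matrix_sum_delta.
apply: cvg_big => [|i _]; first exact: add_continuous.
apply: cvg_big => [|j _]; first exact: add_continuous.
exact: cvgZ (cvg_cst _).
Qed.

Theorem corollary1 (R : realType) (m : nat) (hm : (2 <= m)%N) :
  (fun n : nat => (n%:R)^-1 *: @pa_cov R m n : 'M[R]_2) @ \oo --> (@pa_limit R m : 'M[R]_2).
Proof.
have m_ge1 : (1 <= m)%N by exact: ltnW.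
apply: cvg_mx_entrywise => i j; rewrite mxE; under eq_fun do rewrite !mxE mulrC.
have cov10 n : pa_covariance m 1 0 n = pa_covariance m 0 1 n :> R.
  by rewrite /pa_covariance /pa_comoment mulrC; under eq_fun do rewrite mulrC.
case: i j => [[|[|//]] ?] [[|[|//]] ?] /=.
- exact: cvg_pa_covariance00.
- exact: cvg_pa_covariance01.
- under eq_fun => n do rewrite -[_ * _]/(pa_covariance m 1 0 n / n%:R) cov10.
  exact: cvg_pa_covariance01.
- exact: cvg_pa_covariance11.
Qed.
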